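(* Let $\mathfrak{U}$ be a Banach algebra. Then $\mathfrak{U}$ is symmetrically pseudo-amenable if and only if there exists a net $\{\mathbf{t}_\lambda\}_{\lambda\in\Lambda}$ in $\mathfrak{U}\widehat{\otimes}\mathfrak{U}$ such that for all $a\in\mathfrak{U}$: (i) $a\mathbf{t}_\lambda-\mathbf{t}_\lambda a\to 0$; (ii) $\pi(\mathbf{t}_\lambda)a\to a$; (iii) $a\circ\mathbf{t}_\lambda-\mathbf{t}_\lambda\circ a\to 0$; (iv) $a\,\pi^{\circ}(\mathbf{t}_\lambda)\to a$.
   Context: For a Banach algebra $\mathfrak{U}$, $\mathfrak{U}\widehat{\otimes}\mathfrak{U}$ is the projective tensor product, with the operations (defined on elementary tensors and extended linearly and continuously) $a(b\otimes c)=ab\otimes c$, $(b\otimes c)a=b\otimes ca$, $a\circ(b\otimes c)=b\otimes ac$, $(b\otimes c)\circ a=ba\otimes c$, and the bounded linear maps $\pi,\pi^\circ:\mathfrak{U}\widehat{\otimes}\mathfrak{U}\to\mathfrak{U}$ given by $\pi(b\otimes c)=bc$, $\pi^{\circ}(b\otimes c)=cb$. The flip map is $(b\otimes c)^{\circ}=c\otimes b$; an element $\mathbf{t}$ is symmetric if $\mathbf{t}^\circ=\mathbf{t}$. An approximate diagonal for $\mathfrak{U}$ is a net $\{\mathbf{t}_\lambda\}$ in $\mathfrak{U}\widehat{\otimes}\mathfrak{U}$ (not necessarily bounded) with $a\mathbf{t}_\lambda-\mathbf{t}_\lambda a\to0$ and $\pi(\mathbf{t}_\lambda)a\to a$ for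 all $a\in\mathfrak{U}$. $\mathfrak{U}$ is called symmetrically pseudo-amenable if it has an approximate diagonal consisting of symmetric elements. *)

From HB Require Import structures.
From mathcomp Require Import all_boot all_order all_algebra.
From mathcomp Require Import all_classical all_reals all_analysis.
Set Implicit Arguments. Unset Strict Implicit. Unset Printing Implicit Defensive.
Import Order.TTheory GRing.Theory Num.Theory.
Import numFieldNormedType.Exports.
Local Open Scope ring_scope.

(* Scalar field: any numFieldType K (covers the complex numbers). *)

Definition lin (K : numFieldType) (V E : completeNormedModType K) (f : V -> E) : Prop :=
  forall (k : K) (x y : V), f (k *: x + y) = k *: f x + f y.

Definition bilin (K : numFieldType) (V E : completeNormedModType K)
  (phi : V -> V -> E) : Prop :=
  (forall a, lin (phi a)) /\ (forall b, lin (fun a => phi a b)).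

Record is_banach_algebra (K : numFieldType) (U : completeNormedModType K)
  (mul : U -> U -> U) : Prop := {
  ba_bilin : bilin mul;
  ba_assoc : forall a b c, mul a (mul b c) = mul (mul a b) c;
  ba_submult : forall a b, `|mul a b| <= `|a| * `|b| }.

(* (W, tens) is the projective tensor product U ⊗^ U, characterised (up to
   isometric isomorphism) by its universal property: every bounded bilinear
   map phi : U x U -> E into a Banach space extends uniquely to a bounded
   linear map L : W -> E with L (a ⊗ b) = phi a b and ||L|| = ||phi||. *)
Record is_proj_tensor (K : numFieldType) (U W : completeNormedModType K)
  (tens : U -> U -> W) : Prop := {
  pt_bilin : bilin tens;
  pt_bound : forall a b, `|tens a b| <= `|a| * `|b|;
  pt_ext : forall (E : completeNormedModType K) (phi : U -> U -> E),
    bilin phi ->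
    (exists C : K, forall a b, `|phi a b| <= C * `|a| * `|b|) ->
    exists L : W -> E,
      [/\ lin L, continuous L,
          (forall a b, L (tens a b) = phi a b) &
          (forall M : K, 0 <= M ->
             ((forall w, `|L w| <= M * `|w|) <->
              (forall a b, `|phi a b| <= M * `|a| * `|b|)))];
  pt_uniq : forall (E : completeNormedModType K) (L1 L2 : W -> E),
    lin L1 -> continuous L1 -> lin L2 -> continuous L2 ->
    (forall a b, L1 (tens a b) = L2 (tens a b)) -> L1 = L2 }.

(* The operations on U ⊗^ U, each the (unique) bounded linear map
   determined by its values on elementary tensors:
     lm a t = a t,   rm a t = t a,   lc a t = a ∘ t,   rc a t = t ∘ a,
     pi, pio = π, π°,  flip t = t°.  *)
Record tensor_ops (K : numFieldType) (U W : completeNormedModType K)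
  (mul : U -> U -> U) (tens : U -> U -> W)
  (lm rm lc rc : U -> W -> W) (pi pio : W -> U) (flip : W -> W) : Prop := {
  op_lm : forall a, [/\ lin (lm a), continuous (lm a) &
            forall b c, lm a (tens b c) = tens (mul a b) c];
  op_rm : forall a, [/\ lin (rm a), continuous (rm a) &
            forall b c, rm a (tens b c) = tens b (mul c a)];
  op_lc : forall a, [/\ lin (lc a), continuous (lc a) &
            forall b c, lc a (tens b c) = tens b (mul a c)];
  op_rc : forall a, [/\ lin (rc a), continuous (rc a) &
            forall b c, rc a (tens b c) = tens (mul b a) c];
  op_pi : [/\ lin pi, continuous pi & forall b c, pi (tens b c) = mul b c];
  op_pio : [/\ lin pio, continuous pio & forall b c, pio (tens b c) = mul c b];
  op_flip : [/\ lin flip, continuous flip & forall b c, flip (tens b c) = tens c b] }.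

Record directed (L : Type) (le : L -> L -> Prop) : Prop := {
  dir_refl : forall i, le i i;
  dir_trans : forall i j k, le i j -> le j k -> le i k;
  dir_ub : forall i j, exists k, le i k /\ le j k;
  dir_nonempty : exists i : L, True }.

Definition net_cvg (K : numFieldType) (V : completeNormedModType K)
  (L : Type) (le : L -> L -> Prop) (x : L -> V) (l : V) : Prop :=
  forall e : K, 0 < e -> exists i0, forall i, le i0 i -> `|x i - l| < e.

(* Approximate diagonal (not necessarily bounded) *)
Definition approx_diagonal (K : numFieldType) (U W : completeNormedModType K)
  (mul : U -> U -> U) (lm rm : U -> W -> W) (pi : W -> U)
  (L : Type) (le : L -> L -> Prop) (t : L -> W) : Prop :=
  directed le /\
  forall a : U, net_cvg le (fun i => lm a (t i) - rm a (t i)) 0 /\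
                net_cvg le (fun i => mul (pi (t i)) a) a.

Definition sym_pseudo_amenable (K : numFieldType) (U W : completeNormedModType K)
  (mul : U -> U -> U) (lm rm : U -> W -> W) (pi : W -> U) (flip : W -> W) : Prop :=
  exists (L : Type) (le : L -> L -> Prop) (t : L -> W),
    approx_diagonal mul lm rm pi le t /\ (forall i, flip (t i) = t i).

From HB Require Import structures.
From mathcomp Require Import all_boot all_order all_algebra.
From mathcomp Require Import all_classical all_reals all_analysis.
Import Order.TTheory GRing.Theory Num.Theory.
Import numFieldNormedType.Exports.
Local Open Scope ring_scope.

(* The flip map is an involution of the tensor product that exchanges the
   module actions: (a t)° = a ∘ t°, (t a)° = t° ∘ a, and π° = π ∘ flip.
   Hence conditions (iii)-(iv) for t are conditions (i)-(ii) for t°, so a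
   symmetric approximate diagonal satisfies all four conditions, using
   π(a t - t a) = a π(t) - π(t) a to move a from the right of π(t) to the
   left.  Conversely, if t satisfies (i)-(iv) then (t + t°)/2 is a symmetric
   approximate diagonal. *)

Definition clinear {K : numFieldType} {V E : completeNormedModType K} (f : V -> E) :=
  lin f /\ continuous f.

Section Linear.
Context {K : numFieldType} {V E F : completeNormedModType K}.

Lemma linD {f : V -> E} : lin f -> forall x y, f (x + y) = f x + f y.
Proof. by move=> fL x y; rewrite -[x in LHS]scale1r fL scale1r. Qed.

Lemma lin0 {f : V -> E} : lin f -> f 0 = 0.
Proof. by move=> fL; apply: (@addrI _ (f 0)); rewrite addr0 -linD // addr0. Qed.

Lemma linZ {f : V -> E} : lin f -> forall k x, f (k *: x) = k *: f x.
Proof. by move=> fL k x; rewrite -[k *: x]addr0 fL lin0 // addr0. Qed.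

Lemma linB {f : V -> E} : lin f -> forall x y, f (x - y) = f x - f y.
Proof. by move=> fL x y; rewrite linD // -scaleN1r linZ // scaleN1r. Qed.

Lemma scaler_half_double (v : V) : 2^-1 *: (v + v) = v.
Proof. by rewrite -mulr2n -[v *+ 2]scaler_nat scalerA mulVf ?scale1r // pnatr_eq0. Qed.

Lemma clinear_comp {f : E -> F} {g : V -> E} :
  clinear f -> clinear g -> clinear (f \o g).
Proof.
move=> [fL fC] [gL gC]; split=> [k x y /=|x]; first by rewrite gL fL.
exact: continuous_comp (gC x) (fC (g x)).
Qed.

Lemma clinear_id : clinear (@id V).
Proof. by split=> // x. Qed.

Lemma lin_bounded_continuous {f : V -> E} {C : K} :
  0 <= C -> lin f -> (forall x, `|f x| <= C * `|x|) -> continuous f.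
Proof.
move=> C0 fL fC x; apply/cvgrPdist_lt => e e0.
have C1 : 0 < C + 1 by rewrite ltr_wpDl.
apply/nbhs_normP; exists (e / (C + 1)); first exact: divr_gt0.
move=> y /= xy; rewrite -linB //; apply: (le_lt_trans (fC _)).
apply: (le_lt_trans (ler_wpM2l C0 (ltW xy))).
by rewrite mulrA ltr_pdivrMr // mulrC ltr_pM2l // ltrDl.
Qed.

End Linear.

Section Nets.
Context {K : numFieldType} {V : completeNormedModType K}.
Context {L : Type} {le : L -> L -> Prop}.
Hypothesis le_directed : directed le.
Implicit Types x y : L -> V.

Lemma net_cvg_eq {x y l} : (forall i, x i = y i) -> net_cvg le x l -> net_cvg le y l.
Proof. by move=> xy xl e e0; have [i0 Hi] := xl e e0; exists i0 => i; rewrite -xy; apply: Hi. Qed.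

Lemma net_cvg_continuous {E : completeNormedModType K} {f : V -> E} {x l} :
  {for l, continuous f} -> net_cvg le x l -> net_cvg le (f \o x) (f l).
Proof.
move=> fC xl e e0.
move: fC => /cvgrPdist_lt /(_ e e0) /nbhs_normP [d d0 Hd].
have [i0 Hi0] := xl d d0; exists i0 => i /Hi0 xil.
by rewrite distrC; apply: Hd; rewrite /= distrC.
Qed.

Lemma net_cvg0_clinear {E : completeNormedModType K} {f : V -> E} {x} :
  clinear f -> net_cvg le x 0 -> net_cvg le (f \o x) 0.
Proof. by move=> [fL fC] /(net_cvg_continuous (fC 0)); rewrite lin0. Qed.

Lemma net_cvgD {x y l m} :
  net_cvg le x l -> net_cvg le y m -> net_cvg le (fun i => x i + y i) (l + m).
Proof.
move=> xl ym e e0.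
have e2 : 0 < e / 2 by rewrite divr_gt0.
have [i1 H1] := xl _ e2; have [i2 H2] := ym _ e2.
have [k [k1 k2]] := dir_ub le_directed i1 i2.
exists k => i ki; rewrite opprD addrACA (splitr e).
apply: le_lt_trans (ler_normD _ _) _.
by apply: ltrD; [apply/H1/(dir_trans le_directed k1 ki)|apply/H2/(dir_trans le_directed k2 ki)].
Qed.

Lemma net_cvgZ {x l} (k : K) :
  net_cvg le x l -> net_cvg le (fun i => k *: x i) (k *: l).
Proof. exact: net_cvg_continuous (@scaler_continuous _ _ k l). Qed.

Lemma net_cvg0_subC {x y} :
  net_cvg le (fun i => x i - y i) 0 -> net_cvg le (fun i => y i - x i) 0.
Proof. by move=> xy e /xy[i0 Hi]; exists i0 => i /Hi; rewrite !subr0 distrC. Qed.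

Lemma net_cvg_close {x y l} :
  net_cvg le (fun i => x i - y i) 0 -> net_cvg le x l -> net_cvg le y l.
Proof.
move=> xy xl; have := net_cvgD (net_cvg0_subC xy) xl.
by rewrite add0r; apply: net_cvg_eq => i; rewrite subrK.
Qed.

End Nets.

Section TensorOperations.
Context {K : numFieldType} {U W : completeNormedModType K}.
Context {mul : U -> U -> U} {tens : U -> U -> W}.
Context {lm rm lc rc : U -> W -> W} { pi pio : W -> U} {flip : W -> W}.
Hypothesis mul_banach : is_banach_algebra mul.
Hypothesis tens_proj : is_proj_tensor tens.
Hypothesis ops : tensor_ops mul tens lm rm lc rc pi pio flip.

Lemma clinear_mull a : clinear (mul a).
Proof.
have mulL : lin (mul a) by case: (ba_bilin mul_banach).
by split=> //; apply: (lin_bounded_continuous (normr_ge0 a) mulL) => x; apply: ba_submult.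
Qed.

Lemma clinear_mulr a : clinear (mul^~ a).
Proof.
have mulL : lin (mul^~ a) by case: (ba_bilin mul_banach).
split=> //; apply: (lin_bounded_continuous (normr_ge0 a) mulL) => x.
by rewrite mulrC; apply: ba_submult.
Qed.

Lemma clinear_lm a : clinear (lm a). Proof. by case: (op_lm ops a). Qed.
Lemma clinear_rm a : clinear (rm a). Proof. by case: (op_rm ops a). Qed.
Lemma clinear_lc a : clinear (lc a). Proof. by case: (op_lc ops a). Qed.
Lemma clinear_rc a : clinear (rc a). Proof. by case: (op_rc ops a). Qed.
Lemma clinear_pi : clinear pi. Proof. by case: (op_pi ops). Qed.
Lemma clinear_pio : clinear pio. Proof. by case: (op_pio ops). Qed.
Lemma clinear_flip : clinear flip. Proof. by case: (op_flip ops). Qed.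

Lemma lm_tens a b c : lm a (tens b c) = tens (mul a b) c.
Proof. by case: (op_lm ops a). Qed.
Lemma rm_tens a b c : rm a (tens b c) = tens b (mul c a).
Proof. by case: (op_rm ops a). Qed.
Lemma lc_tens a b c : lc a (tens b c) = tens b (mul a c).
Proof. by case: (op_lc ops a). Qed.
Lemma rc_tens a b c : rc a (tens b c) = tens (mul b a) c.
Proof. by case: (op_rc ops a). Qed.
Lemma pi_tens b c : pi (tens b c) = mul b c.
Proof. by case: (op_pi ops). Qed.
Lemma pio_tens b c : pio (tens b c) = mul c b.
Proof. by case: (op_pio ops). Qed.
Lemma flip_tens b c : flip (tens b c) = tens c b.
Proof. by case: (op_flip ops). Qed.

Lemma tensor_ext {E : completeNormedModType K} {f g : W -> E} :
  clinear f -> clinear g -> (forall b c, f (tens b c) = g (tens b c)) -> f =1 g.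
Proof. by move=> [fL fC] [gL gC] fg; rewrite (pt_uniq tens_proj fL fC gL gC fg). Qed.

Lemma flipK : involutive flip.
Proof.
apply: (tensor_ext (f := flip \o flip)) => [||b c /=]; last by rewrite !flip_tens.
- exact/clinear_comp/clinear_flip/clinear_flip.
- exact: clinear_id.
Qed.

Lemma flip_lm a w : flip (lm a w) = lc a (flip w).
Proof.
apply: (tensor_ext (f := flip \o lm a) (g := lc a \o flip)) => [||b c /=].
- exact/clinear_comp/clinear_lm/clinear_flip.
- exact/clinear_comp/clinear_flip/clinear_lc.
- by rewrite lm_tens !flip_tens lc_tens.
Qed.

Lemma flip_rm a w : flip (rm a w) = rc a (flip w).
Proof.
apply: (tensor_ext (f := flip \o rm a) (g := rc a \o flip)) => [||b c /=].
- exact/clinear_comp/clinear_rm/clinear_flip.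
- exact/clinear_comp/clinear_flip/clinear_rc.
- by rewrite rm_tens !flip_tens rc_tens.
Qed.

Lemma pio_flip w : pio w = pi (flip w).
Proof.
apply: (tensor_ext (g := pi \o flip)) => [||b c /=].
- exact: clinear_pio.
- exact/clinear_comp/clinear_flip/clinear_pi.
- by rewrite pio_tens flip_tens pi_tens.
Qed.

Lemma pi_lm a w : pi (lm a w) = mul a (pi w).
Proof.
apply: (tensor_ext (f := pi \o lm a) (g := mul a \o pi)) => [||b c /=].
- exact/clinear_comp/clinear_lm/clinear_pi.
- exact/clinear_comp/clinear_pi/clinear_mull.
- by rewrite lm_tens !pi_tens (ba_assoc mul_banach).
Qed.

Lemma pi_rm a w : pi (rm a w) = mul (pi w) a.
Proof.
apply: (tensor_ext (f := pi \o rm a) (g := mul^~ a \o pi)) => [||b c /=].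
- exact/clinear_comp/clinear_rm/clinear_pi.
- exact/clinear_comp/clinear_pi/clinear_mulr.
- by rewrite rm_tens !pi_tens (ba_assoc mul_banach).
Qed.

Lemma flip_commutator a w : flip (lm a w - rm a w) = lc a (flip w) - rc a (flip w).
Proof. by rewrite (linB clinear_flip.1) flip_lm flip_rm. Qed.

Lemma flip_ocommutator a w : flip (lc a w - rc a w) = lm a (flip w) - rm a (flip w).
Proof. by rewrite -{1 2}[w]flipK -flip_commutator flipK. Qed.

Lemma pi_commutator a w : pi (lm a w - rm a w) = mul a (pi w) - mul (pi w) a.
Proof. by rewrite (linB clinear_pi.1) pi_lm pi_rm. Qed.

Lemma pio_ocommutator a w : pio (lc a w - rc a w) = mul a (pio w) - mul (pio w) a.
Proof. by rewrite !pio_flip flip_ocommutator pi_commutator. Qed.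

Lemma flip_symmetrization w :
  flip (2^-1 *: (w + flip w)) = 2^-1 *: (w + flip w).
Proof. by rewrite (linZ clinear_flip.1) (linD clinear_flip.1) flipK addrC. Qed.

Section Symmetrization.
Context {L : Type} {le : L -> L -> Prop} {t : L -> W}.

Lemma symmetric_diagonal_opposite :
  approx_diagonal mul lm rm pi le t -> (forall i, flip (t i) = t i) ->
  forall a, net_cvg le (fun i => lc a (t i) - rc a (t i)) 0 /\
            net_cvg le (fun i => mul a (pio (t i))) a.
Proof.
move=> [D diag] t_sym a; have [comm_t pi_t] := diag a; split.
- apply: net_cvg_eq (net_cvg0_clinear clinear_flip comm_t) => i /=.
  by rewrite flip_commutator t_sym.
- have pi_comm : net_cvg le (fun i => mul (pi (t i)) a - mul a (pio (t i))) 0.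
    apply: net_cvg0_subC; apply: net_cvg_eq (net_cvg0_clinear clinear_pi comm_t) => i /=.
    by rewrite pi_commutator pio_flip t_sym.
  exact: (net_cvg_close D pi_comm pi_t).
Qed.

Lemma symmetrization_diagonal : directed le ->
  (forall a, [/\ net_cvg le (fun i => lm a (t i) - rm a (t i)) 0,
                 net_cvg le (fun i => mul (pi (t i)) a) a,
                 net_cvg le (fun i => lc a (t i) - rc a (t i)) 0 &
                 net_cvg le (fun i => mul a (pio (t i))) a]) ->
  approx_diagonal mul lm rm pi le (fun i => 2^-1 *: (t i + flip (t i))).
Proof.
move=> D conds; split=> // a; have [comm_t pi_t ocomm_t pio_t] := conds a; split.
- have := net_cvgZ (2^-1) (net_cvgD D comm_t (net_cvg0_clinear clinear_flip ocomm_t)).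
  rewrite addr0 scaler0; apply: net_cvg_eq => i /=.
  rewrite flip_ocommutator (linZ (clinear_lm a).1) (linZ (clinear_rm a).1).
  by rewrite (linD (clinear_lm a).1) (linD (clinear_rm a).1) -scalerBr opprD addrACA.
- have pio_comm : net_cvg le (fun i => mul a (pio (t i)) - mul (pio (t i)) a) 0.
    apply: net_cvg_eq (net_cvg0_clinear clinear_pio ocomm_t) => i /=.
    by rewrite pio_ocommutator.
  have pio_t_right := net_cvg_close D pio_comm pio_t.
  have := net_cvgZ (2^-1) (net_cvgD D pi_t pio_t_right).
  rewrite scaler_half_double.
  apply: net_cvg_eq => i /=; rewrite (linZ clinear_pi.1) (linD clinear_pi.1) -pio_flip.
  by rewrite (linZ (clinear_mulr a).1) (linD (clinear_mulr a).1).
Qed.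

End Symmetrization.

End TensorOperations.

Theorem proposition3p2 (K : numFieldType) (U W : completeNormedModType K)
  (mul : U -> U -> U) (tens : U -> U -> W)
  (lm rm lc rc : U -> W -> W) (pi pio : W -> U) (flip : W -> W) :
  is_banach_algebra mul ->
  is_proj_tensor tens ->
  tensor_ops mul tens lm rm lc rc pi pio flip ->
  (sym_pseudo_amenable mul lm rm pi flip <->
   exists (L : Type) (le : L -> L -> Prop) (t : L -> W),
     directed le /\
     forall a : U,
       [/\ net_cvg le (fun i => lm a (t i) - rm a (t i)) 0,
           net_cvg le (fun i => mul (pi (t i)) a) a,
           net_cvg le (fun i => lc a (t i) - rc a (t i)) 0 &
           net_cvg le (fun i => mul a (pio (t i))) a]).
Proof.
move=> banach proj ops; split.
- move=> [L [le [t [[D diag] t_sym]]]]; exists L, le, t; split=> // a.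
  have [comm_t pi_t] := diag a.
  have [ocomm_t pio_t] := symmetric_diagonal_opposite banach proj ops (conj D diag) t_sym a.
  exact: And4.
- move=> [L [le [t [D conds]]]].
  exists L, le, (fun i => 2^-1 *: (t i + flip (t i))); split.
  + exact: (symmetrization_diagonal banach proj ops D conds).
  + by move=> i; apply: (flip_symmetrization proj ops).
Qed.
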